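(* The point $C_2=C_2(u)=\left(-\frac{a^2+b^2}{2a}\cos u,-\frac{a^2+b^2}{2b}\sin u\right)$ lies on $\mathcal{E}$ if and only if it equals one of the four points $$W=\frac{1}{2\sqrt{a^2+b^2}}\left(\pm a\sqrt{a^2+3b^2},\;\pm b\sqrt{3a^2+b^2}\right)$$ (all sign combinations). Moreover, whenever $C_2\in\mathcal{E}$, $C_2$ coincides with one of the points $P_1,P_2,P_3$.
   Context: Let $a>b>0$. Let $\mathcal{E}$ be the ellipse $x^2/a^2+y^2/b^2=1$, parametrized by $P(t)=(a\cos t,b\sin t)$. For $u\in\mathbb{R}$ let $M=(a\cos u,b\sin u)$, and for $i=1,2,3$ let $t_i=-u/3-2\pi(i-1)/3$ and $P_i=P(t_i)$ (the pre-images of the cusps of the negative pedal curve of $\mathcal{E}$ with respect to $M$). $C_2$ is the area centroid of that negative pedal curve. *)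

From Stdlib Require Import Reals.
Open Scope R_scope.

Definition ellP (a b t : R) : R * R := (a * cos t, b * sin t).

Definition on_ellipse (a b : R) (p : R * R) : Prop :=
  (fst p) ^ 2 / a ^ 2 + (snd p) ^ 2 / b ^ 2 = 1.

(* The cusp pre-image parameters t_i = -u/3 - 2 pi (i-1)/3, i = 1,2,3. *)
Definition cusp_t (u : R) (i : nat) : R := - u / 3 - 2 * PI * (INR i - 1) / 3.

(* The area centroid C_2(u) of the negative pedal curve, given explicitly. *)
Definition C2 (a b u : R) : R * R :=
  (- (a ^ 2 + b ^ 2) / (2 * a) * cos u, - (a ^ 2 + b ^ 2) / (2 * b) * sin u).

Definition sgn (s : bool) : R := if s then 1 else -1.

Definition W (a b : R) (s1 s2 : bool) : R * R :=
  (/ (2 * sqrt (a ^ 2 + b ^ 2)) * (sgn s1 * a * sqrt (a ^ 2 + 3 * b ^ 2)),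
   / (2 * sqrt (a ^ 2 + b ^ 2)) * (sgn s2 * b * sqrt (3 * a ^ 2 + b ^ 2))).

From Stdlib Require Import Reals Lra.
From Coquelicot Require Import Complex.
Open Scope R_scope.

(* Write C_2 = (a X, b Y) with the normalized coordinates
   X = -(a^2+b^2) cos u / (2a^2) and Y = -(a^2+b^2) sin u / (2b^2).
   Then C_2 lies on the ellipse iff X^2 + Y^2 = 1, while cos^2 u + sin^2 u = 1
   reads a^4 X^2 + b^4 Y^2 = (a^2+b^2)^2 / 4.  Since a^4 <> b^4 this 2x2 linear
   system in (X^2, Y^2) has a unique solution, namely the squared normalized
   coordinates of the points W; a sign choice then gives the first claim.
   For the second claim, on the ellipse the complex number z = X + iY
   satisfies z^3 = cos u - i sin u = e^{-iu}, so z is one of the three cube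
   roots e^{i t_1}, e^{i t_2}, e^{i t_3}, i.e. C_2 = P(t_i). *)

Lemma sq_eq_sgn (x m : R) : 0 <= m -> (x ^ 2 = m ^ 2 <-> exists s : bool, x = sgn s * m).
Proof.
  intros hm; split.
  - intros hsq.
    assert (hfac : (x - m) * (x + m) = 0)
      by (replace ((x - m) * (x + m)) with (x ^ 2 - m ^ 2) by ring; lra).
    destruct (Rmult_integral _ _ hfac) as [h | h]; [exists true | exists false]; simpl; lra.
  - intros [[|] ->]; simpl; ring.
Qed.

Lemma linear_system_unique (p q P Q A B : R) :
  p <> q -> P + Q = 1 -> A + B = 1 -> p * P + q * Q = p * A + q * B ->
  P = A /\ Q = B.
Proof.
  intros hpq hPQ hAB hlin.
  assert (hdiff : (p - q) * (P - A) = 0) by nra.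
  destruct (Rmult_integral _ _ hdiff) as [h | h]; [lra | split; lra].
Qed.

Lemma Cmult_integral (z w : C) : (z * w)%C = 0%C -> z = 0%C \/ w = 0%C.
Proof.
  intros hzw.
  destruct (Ceq_dec z 0) as [hz | hz]; [now left|].
  destruct (Ceq_dec w 0) as [hw | hw]; [now right|].
  exfalso; exact (Cmult_neq_0 z w hz hw hzw).
Qed.

(* If o is a primitive cube root of unity (1 + o + o^2 = 0), then
   z^3 - w^3 = (z - w)(z - w o)(z - w o^2), so z^3 = w^3 forces z to be
   w, w o or w o^2. *)
Lemma cube_roots (z w o : C) :
  (1 + o + o * o)%C = 0%C -> (z * z * z)%C = (w * w * w)%C ->
  z = w \/ z = (w * o)%C \/ z = (w * o * o)%C.
Proof.
  intros ho hcube.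
  assert (hfac : ((z - w) * (z - w * o) * (z - w * o * o))%C = 0%C).
  { transitivity ((z * z * z - w * w * w)
                   + (1 + o + o * o) * (w * o * w * z - w * z * z - (o - 1) * w * w * w))%C;
      [ring | rewrite hcube, ho; ring]. }
  destruct (Cmult_integral _ _ hfac) as [h12 | h3].
  - destruct (Cmult_integral _ _ h12) as [h1 | h2].
    + left; rewrite <- (Cplus_0_r w), <- h1; ring.
    + right; left; rewrite <- (Cplus_0_r (w * o)), <- h2; ring.
  - right; right; rewrite <- (Cplus_0_r (w * o * o)), <- h3; ring.
Qed.

Definition cis (t : R) : C := (cos t, sin t).

Lemma cis_add (s t : R) : cis (s + t) = (cis s * cis t)%C.
Proof.
  unfold cis, Cmult; cbn [fst snd].
  rewrite cos_plus, sin_plus; f_equal; ring.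
Qed.

Lemma cis_cube (t : R) : cis (3 * t) = (cis t * cis t * cis t)%C.
Proof. rewrite <- !cis_add; f_equal; ring. Qed.

Lemma cis_third_turn :
  (1 + cis (- (2 * PI / 3)) + cis (- (2 * PI / 3)) * cis (- (2 * PI / 3)))%C = 0%C.
Proof.
  set (o := cis (- (2 * PI / 3))).
  assert (hcube : (o * o * o)%C = 1%C).
  { unfold o; rewrite <- cis_cube.
    replace (3 * - (2 * PI / 3)) with (- (2 * PI)) by field.
    unfold cis; rewrite cos_neg, sin_neg, cos_2PI, sin_2PI, Ropp_0; reflexivity. }
  assert (hneq : o <> 1%C).
  { unfold o, cis; intros heq; apply (f_equal fst) in heq; cbn in heq.
    rewrite cos_neg in heq.
    replace (2 * PI / 3) with (PI - PI / 3) in heq by field.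
    rewrite Rtrigo_facts.cos_pi_minus, cos_PI3 in heq; lra. }
  assert (hfac : ((o - 1) * (1 + o + o * o))%C = 0%C)
    by (transitivity (o * o * o - 1)%C; [ring | rewrite hcube; ring]).
  destruct (Cmult_integral _ _ hfac) as [h | h]; [|exact h].
  exfalso; apply hneq; rewrite <- (Cplus_0_l 1), <- h; ring.
Qed.

Definition nX (a b u : R) : R := - (a ^ 2 + b ^ 2) * cos u / (2 * a ^ 2).
Definition nY (a b u : R) : R := - (a ^ 2 + b ^ 2) * sin u / (2 * b ^ 2).

Definition wX (a b : R) : R := sqrt (a ^ 2 + 3 * b ^ 2) / (2 * sqrt (a ^ 2 + b ^ 2)).
Definition wY (a b : R) : R := sqrt (3 * a ^ 2 + b ^ 2) / (2 * sqrt (a ^ 2 + b ^ 2)).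

Lemma C2_scaled (a b u : R) : a <> 0 -> b <> 0 -> C2 a b u = (a * nX a b u, b * nY a b u).
Proof. intros ha hb; unfold C2, nX, nY; f_equal; field; auto. Qed.

Lemma W_scaled (a b : R) (s1 s2 : bool) :
  W a b s1 s2 = (a * (sgn s1 * wX a b), b * (sgn s2 * wY a b)).
Proof. unfold W, wX, wY, Rdiv; f_equal; ring. Qed.

Lemma on_ellipse_scaled (a b x y : R) :
  a <> 0 -> b <> 0 -> (on_ellipse a b (a * x, b * y) <-> x ^ 2 + y ^ 2 = 1).
Proof.
  intros ha hb; unfold on_ellipse; cbn [fst snd].
  replace ((a * x) ^ 2 / a ^ 2 + (b * y) ^ 2 / b ^ 2) with (x ^ 2 + y ^ 2)
    by (field; auto).
  reflexivity.
Qed.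

Lemma scaled_pair_inj (a b x y x' y' : R) :
  a <> 0 -> b <> 0 -> (a * x, b * y) = (a * x', b * y') -> x = x' /\ y = y'.
Proof.
  intros ha hb heq; injection heq as hx hy.
  split; [exact (Rmult_eq_reg_l _ _ _ hx ha) | exact (Rmult_eq_reg_l _ _ _ hy hb)].
Qed.

(* The identity cos^2 u + sin^2 u = 1 in normalized coordinates. *)
Lemma nXY_weighted (a b u : R) :
  a <> 0 -> b <> 0 ->
  a ^ 4 * nX a b u ^ 2 + b ^ 4 * nY a b u ^ 2 = (a ^ 2 + b ^ 2) ^ 2 / 4.
Proof.
  intros ha hb; pose proof (sin2_cos2 u) as hpyth; unfold Rsqr in hpyth.
  unfold nX, nY.
  transitivity ((a ^ 2 + b ^ 2) ^ 2 / 4 * (sin u * sin u + cos u * cos u)).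
  - field; auto.
  - rewrite hpyth; ring.
Qed.

Lemma half_sqrt_ratio_sq (m k : R) :
  0 <= m -> 0 < k -> (sqrt m / (2 * sqrt k)) ^ 2 = m / (4 * k).
Proof.
  intros hm hk; assert (hsk : 0 < sqrt k) by (apply sqrt_lt_R0; lra).
  replace ((sqrt m / (2 * sqrt k)) ^ 2) with (sqrt m ^ 2 / (4 * sqrt k ^ 2)) by (field; lra).
  rewrite !pow2_sqrt by lra; reflexivity.
Qed.

Lemma half_sqrt_ratio_nonneg (m k : R) : 0 < k -> 0 <= sqrt m / (2 * sqrt k).
Proof.
  intros hk; assert (hsk : 0 < sqrt k) by (apply sqrt_lt_R0; lra).
  unfold Rdiv; apply Rmult_le_pos; [apply sqrt_pos | left; apply Rinv_0_lt_compat; lra].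
Qed.

Lemma wX_sq (a b : R) : 0 < b -> wX a b ^ 2 = (a ^ 2 + 3 * b ^ 2) / (4 * (a ^ 2 + b ^ 2)).
Proof. intros hb; apply half_sqrt_ratio_sq; nra. Qed.

Lemma wY_sq (a b : R) : 0 < b -> wY a b ^ 2 = (3 * a ^ 2 + b ^ 2) / (4 * (a ^ 2 + b ^ 2)).
Proof. intros hb; apply half_sqrt_ratio_sq; nra. Qed.

(* C_2 lies on the ellipse iff its normalized coordinates have the squares
   of those of W: the linear system X^2 + Y^2 = 1, a^4 X^2 + b^4 Y^2 =
   (a^2+b^2)^2/4 is nondegenerate because a^4 <> b^4. *)
Lemma C2_on_ellipse_iff_squares (a b u : R) :
  0 < b -> b < a ->
  on_ellipse a b (C2 a b u) <-> nX a b u ^ 2 = wX a b ^ 2 /\ nY a b u ^ 2 = wY a b ^ 2.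
Proof.
  intros hb hab; assert (ha : a <> 0) by lra; assert (hb0 : b <> 0) by lra.
  assert (hk : a ^ 2 + b ^ 2 <> 0) by nra.
  assert (hW_circle : wX a b ^ 2 + wY a b ^ 2 = 1)
    by (rewrite wX_sq, wY_sq by lra; field; auto).
  rewrite C2_scaled, on_ellipse_scaled by auto.
  split.
  - intros hcircle; apply linear_system_unique with (p := a ^ 4) (q := b ^ 4); auto.
    + intros h4.
      assert (hsq : (a ^ 2 - b ^ 2) * (a ^ 2 + b ^ 2) = 0)
        by (replace ((a ^ 2 - b ^ 2) * (a ^ 2 + b ^ 2)) with (a ^ 4 - b ^ 4) by ring; lra).
      destruct (Rmult_integral _ _ hsq) as [h | h]; [nra | exact (hk h)].
    + rewrite nXY_weighted, wX_sq, wY_sq by auto; field; auto.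
  - intros [-> ->]; exact hW_circle.
Qed.

Lemma normalized_cube (a b u : R) :
  0 < b -> b < a -> on_ellipse a b (C2 a b u) ->
  let z : C := (nX a b u, nY a b u) in (z * z * z)%C = cis (- u).
Proof.
  intros hb hab hon z; assert (ha : a <> 0) by lra; assert (hb0 : b <> 0) by lra.
  assert (hk : a ^ 2 + b ^ 2 <> 0) by nra.
  destruct (proj1 (C2_on_ellipse_iff_squares a b u hb hab) hon) as [hX hY].
  rewrite wX_sq in hX by lra; rewrite wY_sq in hY by lra.
  unfold z, cis, Cmult; cbn [fst snd]; rewrite cos_neg, sin_neg; f_equal.
  - transitivity (nX a b u * (nX a b u ^ 2 - 3 * nY a b u ^ 2)); [ring|].
    rewrite hX, hY; unfold nX; field; auto.
  - transitivity (nY a b u * (3 * nX a b u ^ 2 - nY a b u ^ 2)); [ring|].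
    rewrite hX, hY; unfold nY; field; auto.
Qed.

Lemma C2_on_ellipse_iff_W (a b u : R) :
  0 < b -> b < a ->
  on_ellipse a b (C2 a b u) <-> exists s1 s2 : bool, C2 a b u = W a b s1 s2.
Proof.
  intros hb hab; assert (ha : a <> 0) by lra; assert (hb0 : b <> 0) by lra.
  assert (hkpos : 0 < a ^ 2 + b ^ 2) by nra.
  rewrite C2_on_ellipse_iff_squares by auto.
  assert (hwX : 0 <= wX a b) by exact (half_sqrt_ratio_nonneg _ _ hkpos).
  assert (hwY : 0 <= wY a b) by exact (half_sqrt_ratio_nonneg _ _ hkpos).
  rewrite (sq_eq_sgn _ _ hwX), (sq_eq_sgn _ _ hwY).
  setoid_rewrite W_scaled; rewrite C2_scaled by auto.
  split.
  - intros [[s1 hX] [s2 hY]]; exists s1, s2; rewrite hX, hY; reflexivity.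
  - intros [s1 [s2 heq]]; destruct (scaled_pair_inj _ _ _ _ _ _ ha hb0 heq).
    split; eauto.
Qed.

Lemma C2_eq_ellP (a b u t : R) :
  a <> 0 -> b <> 0 -> (nX a b u, nY a b u) = cis t -> C2 a b u = ellP a b t.
Proof.
  intros ha hb heq; injection heq as hX hY.
  rewrite C2_scaled, hX, hY by auto; reflexivity.
Qed.

Lemma cis_cusp_t (u : R) :
  let o := cis (- (2 * PI / 3)) in
  cis (cusp_t u 1) = cis (- u / 3) /\
  cis (cusp_t u 2) = (cis (- u / 3) * o)%C /\
  cis (cusp_t u 3) = (cis (- u / 3) * o * o)%C.
Proof.
  intros o; unfold o; rewrite <- !cis_add; unfold cusp_t; cbn [INR].
  repeat split; f_equal; field.
Qed.

Lemma C2_at_cusp (a b u : R) :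
  0 < b -> b < a -> on_ellipse a b (C2 a b u) ->
  exists i : nat, (i = 1%nat \/ i = 2%nat \/ i = 3%nat) /\ C2 a b u = ellP a b (cusp_t u i).
Proof.
  intros hb hab hon; assert (ha : a <> 0) by lra; assert (hb0 : b <> 0) by lra.
  assert (hcube : ((nX a b u, nY a b u) * (nX a b u, nY a b u) * (nX a b u, nY a b u))%C
                  = (cis (- u / 3) * cis (- u / 3) * cis (- u / 3))%C).
  { rewrite (normalized_cube a b u hb hab hon), <- cis_cube; f_equal; field. }
  destruct (cis_cusp_t u) as (h1 & h2 & h3).
  destruct (cube_roots _ _ _ cis_third_turn hcube) as [hz | [hz | hz]].
  - exists 1%nat; split; [auto | apply C2_eq_ellP; congruence].
  - exists 2%nat; split; [auto | apply C2_eq_ellP; congruence].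
  - exists 3%nat; split; [auto | apply C2_eq_ellP; congruence].
Qed.

Theorem proposition6p1 (a b u : R) (hb : 0 < b) (hab : b < a) :
  (on_ellipse a b (C2 a b u) <-> exists s1 s2 : bool, C2 a b u = W a b s1 s2) /\
  (on_ellipse a b (C2 a b u) ->
     exists i : nat, (i = 1%nat \/ i = 2%nat \/ i = 3%nat) /\
       C2 a b u = ellP a b (cusp_t u i)).
Proof.
  split.
  - exact (C2_on_ellipse_iff_W a b u hb hab).
  - exact (C2_at_cusp a b u hb hab).
Qed.
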